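(* Let $(\alpha_s)$, $(\sigma_s)$ be positive coefficients with $\alpha_s^2+\sigma_s^2=1$. Fix reverse times $t+\Delta t$, $t$, $t-\Delta t$, a vector $\boldsymbol{\epsilon}\in\mathbb{R}^n$ (the noise prediction $\bm{\epsilon}_\Theta(\boldsymbol{x}_t,t)$, treated as deterministic), and a real number $\beta_t>0$. Let $\mu_t,\mu_{t+\Delta t}\in\mathbb{R}^n$ be deterministic vectors and let $\eta_t,\eta_{t+\Delta t}$ be random vectors in $\mathbb{R}^n$ with $\mathbb{E}[\eta_t]=\mathbb{E}[\eta_{t+\Delta t}]=0$, $\mathrm{Var}(\eta_t)=\mathrm{Var}(\eta_{t+\Delta t})=\Sigma_t$ and $\mathrm{Cov}(\eta_t,\eta_{t+\Delta t})=\rho_t\Sigma_t$ for some $0\le\rho_t<1$. Set $\boldsymbol{D}_t=\mu_t+\eta_t$, $\boldsymbol{D}_{t+\Delta t}=\mu_{t+\Delta t}+\eta_{t+\Delta t}$, $\widetilde{\boldsymbol{D}}_t=(1-\beta_t)\boldsymbol{D}_t+\beta_t\boldsymbol{D}_{t+\Delta t}$, $r_t:=\mu_{t+\Delta t}-\mu_t$, and $$\boldsymbol{x}^{\mathrm{PS}}_{t-\Delta t}=\alpha_{t-\Delta t}\boldsymbol{D}_t+\sigma_{t-\Delta t}\boldsymbol{\epsilon},\quad \boldsymbol{x}^{\mathrm{LAMP}}_{t-\Delta t}=\alpha_{t-\Delta t}\widetilde{\boldsymbol{D}}_t+\sigma_{t-\Delta t}\boldsymbol{\epsilon},\quad \boldsymbol{x}^{\mu}_{t-\Delta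 t}=\alpha_{t-\Delta t}\mu_t+\sigma_{t-\Delta t}\boldsymbol{\epsilon}.$$ Then $$\mathbb{E}\|\boldsymbol{x}^{\mathrm{PS}}_{t-\Delta t}-\boldsymbol{x}^{\mu}_{t-\Delta t}\|^2=\alpha_{t-\Delta t}^2\,\mathrm{tr}(\Sigma_t),$$ $$\mathbb{E}\|\boldsymbol{x}^{\mathrm{LAMP}}_{t-\Delta t}-\boldsymbol{x}^{\mu}_{t-\Delta t}\|^2=\alpha_{t-\Delta t}^2\Big[\big(1-2\beta_t(1-\beta_t)(1-\rho_t)\big)\mathrm{tr}(\Sigma_t)+\beta_t^2\|r_t\|^2\Big].$$ Consequently, $\mathbb{E}\|\boldsymbol{x}^{\mathrm{LAMP}}_{t-\Delta t}-\boldsymbol{x}^{\mu}_{t-\Delta t}\|^2<\mathbb{E}\|\boldsymbol{x}^{\mathrm{PS}}_{t-\Delta t}-\boldsymbol{x}^{\mu}_{t-\Delta t}\|^2$ whenever $$\beta_t\|r_t\|^2<2(1-\beta_t)(1-\rho_t)\,\mathrm{tr}(\Sigma_t).$$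
   Context: $\boldsymbol{D}_t,\boldsymbol{D}_{t+\Delta t}$ model data-consistent estimates in a diffusion posterior sampler as local targets $\mu$ plus zero-mean estimation errors $\eta$; $\boldsymbol{x}^{\mu}_{t-\Delta t}$ is the ideal one-step state. $\mathrm{Var}$ denotes the covariance matrix and $\mathrm{Cov}(\eta_t,\eta_{t+\Delta t})=\mathbb{E}[\eta_t\eta_{t+\Delta t}^\top]$; $\|\cdot\|$ is the Euclidean norm. *)

From HB Require Import structures.
From mathcomp Require Import all_boot all_order all_algebra.
From mathcomp Require Import all_classical all_reals all_analysis.
Set Implicit Arguments. Unset Strict Implicit. Unset Printing Implicit Defensive.
Import Order.TTheory GRing.Theory Num.Theory.
Local Open Scope ring_scope.

Definition sqnorm (R : realType) (n : nat) (v : 'rV[R]_n) : R :=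
  \sum_(i < n) (v ord0 i) ^+ 2.

Definition rvcomp (T : Type) (R : realType) (n : nat)
  (X : T -> 'rV[R]_n) (i : 'I_n) : T -> R := fun w => X w ord0 i.

From HB Require Import structures.
From mathcomp Require Import all_boot all_order all_algebra.
From mathcomp Require Import all_classical all_reals all_analysis.
From mathcomp Require Import ring.
Import Order.TTheory GRing.Theory Num.Theory.
Local Open Scope ring_scope.

(* Coordinatewise, both deviations from the ideal state are affine combinations
   c + p eta_t + q eta_s of the centred noises, whose mean square is
   c^2 + p^2 Var eta_t + q^2 Var eta_s + 2 p q Cov(eta_t, eta_s).  Plain
   posterior sampling is (c, p, q) = (0, a, 0); the extrapolated estimate is
   (a beta r, a (1 - beta), a beta).  Summing over coordinates turns variances
   into traces, and the two mean squares differ by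
   a^2 beta (beta |r|^2 - 2 (1 - beta) (1 - rho) tr Sigma). *)

Lemma sqnorm0 (R : realType) (n : nat) : sqnorm (0 : 'rV[R]_n) = 0.
Proof. by rewrite /sqnorm big1 // => i _; rewrite mxE expr0n. Qed.

Lemma sqnormZ (R : realType) (n : nat) (k : R) (v : 'rV[R]_n) :
  sqnorm (k *: v) = k ^+ 2 * sqnorm v.
Proof. by rewrite /sqnorm mulr_sumr; apply: eq_bigr => i _; rewrite mxE exprMn. Qed.

Section second_moments.
Context d (T : measurableType d) (R : realType) (P : probability T R).
Local Open Scope ereal_scope.

Let Lfun2_Lfun1 {X : T -> R} : X \in Lfun P 2%:E -> X \in Lfun P 1.
Proof. exact/Lfun_subset12/fin_num_measure. Qed.

Let Lfun2_scale (k : R) {X : T -> R} :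
  X \in Lfun P 2%:E -> (k \o* X)%R \in Lfun P 2%:E.
Proof. by apply: Lfun_scale; rewrite ler1n. Qed.

Let Lfun2_add {X Y : T -> R} :
  X \in Lfun P 2%:E -> Y \in Lfun P 2%:E -> (X \+ Y)%R \in Lfun P 2%:E.
Proof. by move=> X2 Y2; rewrite rpredD ?lee1n. Qed.

Let Lfun2_affine2 (c p q : R) {X Y : T -> R} :
    X \in Lfun P 2%:E -> Y \in Lfun P 2%:E ->
  (cst c \+ (p \o* X \+ q \o* Y))%R \in Lfun P 2%:E.
Proof.
move=> X2 Y2; apply: Lfun2_add; first exact: Lfun_cst.
by apply: Lfun2_add; exact: Lfun2_scale.
Qed.

Lemma expectation_bigsum (I : Type) (s : seq I) (F : I -> T -> R) :
    (forall i, F i \in Lfun P 1) ->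
  'E_P[\sum_(i <- s) F i] = \sum_(i <- s) 'E_P[F i].
Proof.
move=> F1; elim: s => [|i s IH]; first by rewrite !big_nil expectation_cst.
by rewrite !big_cons expectationD ?IH// rpred_sum.
Qed.

Lemma expectation_sqr (X : T -> R) : X \in Lfun P 2%:E ->
  'E_P[(X ^+ 2)%R] = variance P X + 'E_P[X] ^+ 2.
Proof.
move=> X2; rewrite varianceE// subeK//.
by rewrite fin_numX// expectation_fin_num// Lfun2_Lfun1.
Qed.

Lemma covarianceE_centered (X Y : T -> R) :
    X \in Lfun P 2%:E -> Y \in Lfun P 2%:E -> 'E_P[X] = 0 ->
  covariance P X Y = 'E_P[(X * Y)%R].
Proof.
move=> X2 Y2 EX0.
rewrite covarianceE ?Lfun2_mul_Lfun1//; last 2 first.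
- exact: Lfun2_Lfun1.
- exact: Lfun2_Lfun1.
by rewrite EX0 mul0e sube0.
Qed.

Lemma expectation_affine2 (c p q : R) (X Y : T -> R) :
    X \in Lfun P 1 -> Y \in Lfun P 1 ->
  'E_P[cst c \+ (p \o* X \+ q \o* Y)]%R =
    c%:E + (p%:E * 'E_P[X] + q%:E * 'E_P[Y]).
Proof.
move=> X1 Y1.
rewrite !expectationD ?rpredD ?Lfun_scale ?Lfun_cst//.
by rewrite expectation_cst !expectationZl.
Qed.

Lemma variance_affine2 (c p q : R) (X Y : T -> R) :
    X \in Lfun P 2%:E -> Y \in Lfun P 2%:E ->
  variance P (cst c \+ (p \o* X \+ q \o* Y))%R =
    (p ^+ 2)%:E * variance P X + (q ^+ 2)%:E * variance P Y
    + (2 * p * q)%:E * covariance P X Y.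
Proof.
move=> X2 Y2; have pX2 := Lfun2_scale p X2; have qY2 := Lfun2_scale q Y2.
have X1 := Lfun2_Lfun1 X2; have Y1 := Lfun2_Lfun1 Y2.
have qY1 := Lfun2_Lfun1 qY2.
rewrite varianceD_cst_l; last exact: Lfun2_add.
rewrite varianceD// !varianceZ//.
have XqY1 := Lfun2_mul_Lfun1 X2 qY2; have XY1 := Lfun2_mul_Lfun1 X2 Y2.
rewrite covarianceZl// covarianceZr//.
by rewrite !muleA -!EFinM.
Qed.

Lemma expectation_sqr_affine2 (c p q : R) (X Y : T -> R) :
    X \in Lfun P 2%:E -> Y \in Lfun P 2%:E -> 'E_P[X] = 0 -> 'E_P[Y] = 0 ->
  'E_P[((cst c \+ (p \o* X \+ q \o* Y)) ^+ 2)%R] =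
    (c ^+ 2)%:E + ((p ^+ 2)%:E * variance P X + (q ^+ 2)%:E * variance P Y
                   + (2 * p * q)%:E * covariance P X Y).
Proof.
move=> X2 Y2 EX0 EY0.
rewrite expectation_sqr ?Lfun2_affine2// variance_affine2//.
rewrite expectation_affine2; last 2 first.
- exact: Lfun2_Lfun1.
- exact: Lfun2_Lfun1.
rewrite EX0 EY0 !mule0 !adde0.
by rewrite addeC EFin_expe.
Qed.

Lemma expectation_sqnorm_affine2 (n : nat) (c : 'rV[R]_n) (p q rho : R)
    (X Y : T -> 'rV[R]_n) (Sigma : 'M[R]_n) :
    (forall i, rvcomp X i \in Lfun P 2%:E) ->
    (forall i, rvcomp Y i \in Lfun P 2%:E) ->
    (forall i, 'E_P[rvcomp X i] = 0) -> (forall i, 'E_P[rvcomp Y i] = 0) ->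
    (forall i, variance P (rvcomp X i) = (Sigma i i)%:E) ->
    (forall i, variance P (rvcomp Y i) = (Sigma i i)%:E) ->
    (forall i, covariance P (rvcomp X i) (rvcomp Y i) = (rho * Sigma i i)%:E) ->
  'E_P[fun w => sqnorm (c + p *: X w + q *: Y w)] =
    (sqnorm c + (p ^+ 2 + q ^+ 2 + 2 * p * q * rho) * \tr Sigma)%:E.
Proof.
move=> X2 Y2 EX0 EY0 VX VY CXY.
pose Z i := (cst (c ord0 i) \+ (p \o* rvcomp X i \+ q \o* rvcomp Y i))%R.
have Z2 i : Z i \in Lfun P 2%:E by exact: Lfun2_affine2.
have -> : (fun w => sqnorm (c + p *: X w + q *: Y w)) = (\sum_(i < n) Z i ^+ 2)%R.
  apply/funext => w; rewrite fct_sumE /sqnorm; apply: eq_bigr => i _.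
  by rewrite exprfctE /Z /rvcomp /= !mxE; ring.
rewrite expectation_bigsum => [|i]; last exact: Lfun2_mul_Lfun1.
under eq_bigr do rewrite expectation_sqr_affine2// VX VY CXY -!EFinM -!EFinD.
rewrite sumEFin /sqnorm /mxtrace mulr_sumr -big_split/=.
by congr EFin; apply: eq_bigr => i _; ring.
Qed.

End second_moments.

Theorem proposition2 (d : measure_display) (T : measurableType d)
  (R : realType) (P : probability T R) (n : nat)
  (alpha sigma : R -> R)
  (halpha : forall s, 0 < alpha s) (hsigma : forall s, 0 < sigma s)
  (hunit : forall s, alpha s ^+ 2 + sigma s ^+ 2 = 1)
  (t dt : R) (hdt : 0 < dt)
  (eps : 'rV[R]_n) (beta : R) (hbeta : 0 < beta)
  (mu_t mu_s : 'rV[R]_n) (eta_t eta_s : T -> 'rV[R]_n)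
  (Sigma : 'M[R]_n) (rho : R) (hrho0 : 0 <= rho) (hrho1 : rho < 1)
  (L2t : forall i, rvcomp eta_t i \in Lfun P 2%:E)
  (L2s : forall i, rvcomp eta_s i \in Lfun P 2%:E)
  (Et : forall i, ('E_P[rvcomp eta_t i] = 0)%E)
  (Es : forall i, ('E_P[rvcomp eta_s i] = 0)%E)
  (Vt : forall i j, covariance P (rvcomp eta_t i) (rvcomp eta_t j) = (Sigma i j)%:E)
  (Vs : forall i j, covariance P (rvcomp eta_s i) (rvcomp eta_s j) = (Sigma i j)%:E)
  (Cts : forall i j,
     ('E_P[fun w => (rvcomp eta_t i w * rvcomp eta_s j w)%R] = (rho * Sigma i j)%:E)%E) :
  let D_t := fun w => mu_t + eta_t w in
  let D_s := fun w => mu_s + eta_s w in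
  let Dtil := fun w => (1 - beta) *: D_t w + beta *: D_s w in
  let r := mu_s - mu_t in
  let a := alpha (t - dt) in
  let sg := sigma (t - dt) in
  let xPS := fun w => a *: D_t w + sg *: eps in
  let xLAMP := fun w => a *: Dtil w + sg *: eps in
  let xmu := a *: mu_t + sg *: eps in
  ('E_P[fun w => sqnorm (xPS w - xmu)] = (a ^+ 2 * \tr Sigma)%:E)%E /\
  ('E_P[fun w => sqnorm (xLAMP w - xmu)] =
     (a ^+ 2 * ((1 - 2 * beta * (1 - beta) * (1 - rho)) * \tr Sigma
                + beta ^+ 2 * sqnorm r))%:E)%E /\
  (beta * sqnorm r < 2 * (1 - beta) * (1 - rho) * \tr Sigma ->
   ('E_P[fun w => sqnorm (xLAMP w - xmu)] < 'E_P[fun w => sqnorm (xPS w - xmu)])%E).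
Proof.
move=> D_t D_s Dtil r a sg xPS xLAMP xmu.
(* Beyond the moment assumptions, only 0 < a and 0 < beta are used. *)
have Cts_diag i : covariance P (rvcomp eta_t i) (rvcomp eta_s i) = (rho * Sigma i i)%:E.
  by rewrite covarianceE_centered//; exact: Cts.
have moments c p q := @expectation_sqnorm_affine2 _ _ _ P n c p q rho eta_t eta_s Sigma
  L2t L2s Et Es (fun i => Vt i i) (fun i => Vs i i) Cts_diag.
have E_PS : ('E_P[fun w => sqnorm (xPS w - xmu)] = (a ^+ 2 * \tr Sigma)%:E)%E.
  rewrite (_ : (fun w => _) = fun w => sqnorm (0 + a *: eta_t w + 0 *: eta_s w)).
    by rewrite moments sqnorm0; congr EFin; ring.
  by apply/funext => w; congr sqnorm; apply/rowP => i; rewrite !mxE; ring.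
have E_LAMP : ('E_P[fun w => sqnorm (xLAMP w - xmu)] =
     (a ^+ 2 * ((1 - 2 * beta * (1 - beta) * (1 - rho)) * \tr Sigma
                + beta ^+ 2 * sqnorm r))%:E)%E.
  rewrite (_ : (fun w => _) = fun w =>
      sqnorm ((a * beta) *: r + (a * (1 - beta)) *: eta_t w + (a * beta) *: eta_s w)).
    by rewrite moments sqnormZ; congr EFin; ring.
  apply/funext => w; congr sqnorm; apply/rowP => i.
  by rewrite /xLAMP /xmu /Dtil /D_t /D_s /r !mxE; ring.
split=> //; split=> // tradeoff.
rewrite E_PS E_LAMP lte_fin -subr_lt0.
have -> : a ^+ 2 * ((1 - 2 * beta * (1 - beta) * (1 - rho)) * \tr Sigma
              + beta ^+ 2 * sqnorm r) - a ^+ 2 * \tr Sigma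
    = (a ^+ 2 * beta) * (beta * sqnorm r - 2 * (1 - beta) * (1 - rho) * \tr Sigma).
  by ring.
by rewrite pmulr_rlt0 ?subr_lt0// mulr_gt0// exprn_gt0 ?halpha.
Qed.
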